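(* Let $\mathcal{T}$ denote the bounded linear operator on the quotient space $H_{ber}^2(D)/X$ induced by the operator $\mathcal{T}:\sum_{n\ge 0} a_n z^n\mapsto \sum_{n\ge 0} a_n z^{T(n)}$ on the Bergman space, where $X=\operatorname{span}\{1,z,z^2\}$. Then $\mathcal{T}$ is surjective on $H_{ber}^2(D)/X$. Moreover, if the Collatz conjecture holds, then \[ H_{ber}^2(D)/X=\overline{\bigcup_{n=1}^{\infty}\operatorname{Ker}(\mathcal{T}^n)}. \]
   Context: $T:\mathbb{Z}\to\mathbb{Z}$ is the (reduced) Collatz map: $T(n)=\frac{3n+1}{2}$ for odd $n$ and $T(n)=\frac n2$ for even $n$. $D$ is the open unit disk. $H_{ber}^2(D)$ is the Bergman space of holomorphic functions $f$ on $D$ with $\|f\|^2=\int_D|f|^2\,dA<\infty$ (so $\|z^n\|^2=\frac{\pi}{n+1}$). The operator $\mathcal{T}f(z)=(Sf)(\sqrt z)+\sqrt z\,(Af)(z^{3/2})$, with $Sf(z)=\frac{f(z)+f(-z)}2$, $Af(z)=\frac{f(z)-f(-z)}2$, acts on power series by $\sum a_nz^n\mapsto\sum a_n z^{T(n)}$ (i.e. $\mathcal{T}z^n=z^{T(n)}$); it is a bounded operator on $H_{ber}^2(D)$ and leaves $X=\operatorname{span}\{1,z,z^2\}$ invariant, hence induces a bounded operator on the quotient Banach space $H_{ber}^2(D)/X$. The Collatz conjecture is the statement that for every positive integer $n$ there is $k\ge 0$ with $T^k(n)=1$. *)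

From Stdlib Require Import Reals Arith.
From Coquelicot Require Import Coquelicot.
Open Scope R_scope.

Definition collatzT (n : nat) : nat :=
  if Nat.odd n then ((3 * n + 1) / 2)%nat else (n / 2)%nat.

Definition collatz_conjecture : Prop :=
  forall n : nat, (1 <= n)%nat -> exists k : nat, Nat.iter k collatzT n = 1%nat.

(* A holomorphic function on D is identified with its Taylor coefficient
   sequence a : nat -> C  (f = sum a_n z^n). *)

(* n-th term of the squared Bergman norm: |a_n|^2 * ||z^n||^2, ||z^n||^2 = pi/(n+1). *)
Definition bergman_term (a : nat -> C) (n : nat) : R :=
  (Cmod (a n)) ^ 2 * (PI / INR (n + 1)).

Definition in_bergman (a : nat -> C) : Prop := ex_series (bergman_term a).

Definition bergman_norm (a : nat -> C) : R := sqrt (Series (bergman_term a)).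

Definition inX (a : nat -> C) : Prop := forall n : nat, (3 <= n)%nat -> a n = RtoC 0.

Definition csub (a b : nat -> C) : nat -> C := fun n => Cminus (a n) (b n).

(* The operator  sum a_n z^n |-> sum a_n z^(T n):  the coefficient of z^m in the
   image is the sum of the a_n over all n with T n = m (all such n satisfy n <= 2m). *)
Definition Top (a : nat -> C) : nat -> C :=
  fun m => sum_n (fun n => if Nat.eqb (collatzT n) m then a n else RtoC 0) (2 * m).

From Stdlib Require Import Reals Arith Lia Lra FunctionalExtensionality.
From Coquelicot Require Import Coquelicot.
Open Scope R_scope.

(* Since T(2m) = m, the operator sends f(z^2) to f, and f(z^2) is again in the
   Bergman space: this gives surjectivity.  T sends monomials to monomials and
   maps {0,1,2} into itself, so X is invariant; under the Collatz conjecture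
   every z^k is sent into X by some power of T.  Hence every polynomial lies in
   the union of the kernels of the induced operator, and the Taylor polynomials
   of f converge to f in the Bergman norm. *)

Lemma ex_series_0 : ex_series (fun _ : nat => 0).
Proof.
exists 0; apply is_series_Reals; intros eps Heps; exists O; intros n _.
rewrite sum_cte; unfold Rdist; rewrite Rmult_0_l, Rminus_0_r, Rabs_R0; exact Heps.
Qed.

Lemma ex_series_even_support (u : nat -> R) :
  (forall k, u (2 * k + 1)%nat = 0) -> ex_series (fun k => u (2 * k)%nat) ->
  ex_series u.
Proof.
intros Hodd Heven.
assert (Hpseries1 : forall (v : nat -> R) x, x = 1 -> ex_pseries v x <-> ex_series v).
{ intros v x ->; unfold ex_pseries.
  split; apply ex_series_ext; intros k; rewrite pow_n_pow, pow1;
    [exact (Rmult_1_l _) | exact (eq_sym (Rmult_1_l _))]. }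
apply (Hpseries1 u 1 eq_refl), ex_pseries_odd_even;
  apply Hpseries1; try apply pow1; [exact Heven|].
apply (ex_series_ext (fun _ => 0)); [intros k; now rewrite Hodd | exact ex_series_0].
Qed.

Lemma Series_shift_small (u : nat -> R) eps :
  ex_series u -> 0 < eps -> exists N, Series (fun k => u (N + k)%nat) < eps.
Proof.
intros Hu Heps.
destruct (proj1 (is_series_Reals _ _) (Series_correct _ Hu) eps Heps) as [N HN].
specialize (HN N (le_n N)); unfold Rdist in HN.
apply Rabs_def2 in HN as [_ HN].
exists (S N); rewrite (Series_incr_n u (S N)) in HN by (lia || exact Hu).
simpl Init.Nat.pred in HN; lra.
Qed.

Lemma sqrt_lt_of_lt_sq x eps : 0 < eps -> x < eps ^ 2 -> sqrt x < eps.
Proof.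
intros Heps Hx; destruct (Rle_dec 0 x).
- rewrite <- (sqrt_pow2 eps) by lra; apply sqrt_lt_1_alt; lra.
- rewrite sqrt_neg_0 by lra; exact Heps.
Qed.

Lemma collatzT_double m : collatzT (2 * m) = m.
Proof.
unfold collatzT; rewrite Nat.odd_even, Nat.mul_comm, Nat.div_mul; lia.
Qed.

Lemma collatzT_double_succ m : collatzT (2 * m + 1) = (3 * m + 2)%nat.
Proof.
unfold collatzT; rewrite Nat.odd_odd.
replace (3 * (2 * m + 1) + 1)%nat with ((3 * m + 2) * 2)%nat by lia.
rewrite Nat.div_mul; lia.
Qed.

Lemma le_collatzT k : (k <= 2 * collatzT k)%nat.
Proof.
destruct (Nat.Even_or_Odd k) as [[m ->] | [m ->]].
- rewrite collatzT_double; lia.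
- rewrite collatzT_double_succ; lia.
Qed.

Lemma collatzT_lt3 k : (k < 3)%nat -> (collatzT k < 3)%nat.
Proof. intros Hk; destruct k as [|[|[|k]]]; cbv; lia. Qed.

Definition monomial (k : nat) (c : C) : nat -> C :=
  fun m => if Nat.eqb m k then c else RtoC 0.

Definition cadd (a b : nat -> C) : nat -> C := fun m => Cplus (a m) (b m).

Definition trunc (f : nat -> C) (N : nat) : nat -> C :=
  fun m => if Nat.ltb m N then f m else RtoC 0.

Definition tail (f : nat -> C) (N : nat) : nat -> C :=
  fun m => if Nat.ltb m N then RtoC 0 else f m.

Definition comp_sq (f : nat -> C) : nat -> C :=
  fun n => if Nat.odd n then RtoC 0 else f (n / 2)%nat.

Lemma csub_0r a : csub a (fun _ => RtoC 0) = a.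
Proof. apply functional_extensionality; intros m; unfold csub; ring. Qed.

Lemma csub_trunc f N : csub f (trunc f N) = tail f N.
Proof.
apply functional_extensionality; intros m; unfold csub, trunc, tail.
destruct (Nat.ltb m N); ring.
Qed.

Lemma trunc_S f N : trunc f (S N) = cadd (trunc f N) (monomial N (f N)).
Proof.
apply functional_extensionality; intros m; unfold cadd, trunc, monomial.
destruct (Nat.ltb_spec m N), (Nat.ltb_spec m (S N)), (Nat.eqb_spec m N);
  try lia; subst; auto using Cplus_0_l, Cplus_0_r.
Qed.

Lemma comp_sq_double f k : comp_sq f (2 * k) = f k.
Proof.
unfold comp_sq; rewrite Nat.odd_even, (Nat.mul_comm 2 k), Nat.div_mul; auto.
Qed.

Lemma comp_sq_double_succ f k : comp_sq f (2 * k + 1) = RtoC 0.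
Proof. unfold comp_sq; now rewrite Nat.odd_odd. Qed.

Lemma sum_n_monomial k c N :
  sum_n (monomial k c) N = if Nat.leb k N then c else RtoC 0.
Proof.
induction N as [|N IHN].
- rewrite sum_O; unfold monomial; destruct k; reflexivity.
- rewrite sum_Sn, IHN; unfold monomial.
  destruct (Nat.eqb_spec (S N) k), (Nat.leb_spec k N), (Nat.leb_spec k (S N));
    try lia; change (plus ?a ?b) with (Cplus a b);
    auto using Cplus_0_l, Cplus_0_r.
Qed.

Lemma Top_monomial k c : Top (monomial k c) = monomial (collatzT k) c.
Proof.
apply functional_extensionality; intros m; unfold Top.
rewrite (sum_n_ext _ (monomial k (if Nat.eqb (collatzT k) m then c else RtoC 0))).
- rewrite sum_n_monomial; unfold monomial.
  pose proof (le_collatzT k).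
  destruct (Nat.eqb_spec (collatzT k) m), (Nat.eqb_spec m (collatzT k)),
    (Nat.leb_spec k (2 * m)); reflexivity || lia.
- intros n; unfold monomial.
  destruct (Nat.eqb_spec n k); [now subst|].
  now destruct (Nat.eqb (collatzT n) m).
Qed.

Lemma Top_cadd a b : Top (cadd a b) = cadd (Top a) (Top b).
Proof.
apply functional_extensionality; intros m; unfold Top, cadd.
rewrite <- (sum_n_plus (G := C_AbelianMonoid)); apply sum_n_ext; intros n.
destruct (Nat.eqb (collatzT n) m); [reflexivity|].
symmetry; apply Cplus_0_l.
Qed.

Lemma Top_inX a : inX a -> inX (Top a).
Proof.
intros Ha m Hm; unfold Top.
rewrite (sum_n_ext _ (fun _ => zero)); [exact (sum_n_m_const_zero 0 (2 * m))|].
intros n; destruct (Nat.eqb_spec (collatzT n) m); [|reflexivity].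
apply Ha; pose proof (collatzT_lt3 n); lia.
Qed.

Lemma Top_comp_sq f : Top (comp_sq f) = f.
Proof.
apply functional_extensionality; intros m; unfold Top.
rewrite (sum_n_ext _ (monomial (2 * m) (f m))), sum_n_monomial, Nat.leb_refl;
  [reflexivity|].
intros n; unfold monomial; destruct (Nat.Even_or_Odd n) as [[k ->] | [k ->]].
- rewrite collatzT_double, comp_sq_double.
  destruct (Nat.eqb_spec k m), (Nat.eqb_spec (2 * k) (2 * m)); subst; reflexivity || lia.
- rewrite comp_sq_double_succ.
  destruct (Nat.eqb (collatzT _) m), (Nat.eqb_spec (2 * k + 1) (2 * m));
    reflexivity || lia.
Qed.

Lemma iter_Top_monomial n k c :
  Nat.iter n Top (monomial k c) = monomial (Nat.iter n collatzT k) c.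
Proof. induction n as [|n IHn]; simpl; [|rewrite IHn, Top_monomial]; reflexivity. Qed.

Lemma iter_Top_cadd n a b :
  Nat.iter n Top (cadd a b) = cadd (Nat.iter n Top a) (Nat.iter n Top b).
Proof. induction n as [|n IHn]; simpl; [|rewrite IHn, Top_cadd]; reflexivity. Qed.

Lemma iter_Top_inX n a : inX a -> inX (Nat.iter n Top a).
Proof. induction n; simpl; auto using Top_inX. Qed.

Lemma inX_iter_Top_le n p a :
  (n <= p)%nat -> inX (Nat.iter n Top a) -> inX (Nat.iter p Top a).
Proof.
intros Hnp Ha; replace p with (p - n + n)%nat by lia.
rewrite Nat.iter_add; now apply iter_Top_inX.
Qed.

Definition nilpotent_mod_X (a : nat -> C) : Prop :=
  exists n, inX (Nat.iter n Top a).

Lemma nilpotent_mod_X_cadd a b :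
  nilpotent_mod_X a -> nilpotent_mod_X b -> nilpotent_mod_X (cadd a b).
Proof.
intros [n Ha] [p Hb]; exists (n + p)%nat; rewrite iter_Top_cadd.
intros m Hm; unfold cadd.
rewrite (inX_iter_Top_le n (n + p) a), (inX_iter_Top_le p (n + p) b);
  auto using Cplus_0_l with arith.
Qed.

Lemma nilpotent_mod_X_monomial k c :
  collatz_conjecture -> nilpotent_mod_X (monomial k c).
Proof.
intros Hcollatz; destruct k as [|k].
- exists O; intros m Hm; unfold monomial; simpl.
  destruct (Nat.eqb_spec m 0); [lia | reflexivity].
- destruct (Hcollatz (S k)) as [j Hj]; [lia|].
  exists j; rewrite iter_Top_monomial, Hj; intros m Hm; unfold monomial.
  destruct (Nat.eqb_spec m 1); [lia | reflexivity].
Qed.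

Lemma nilpotent_mod_X_trunc f N :
  collatz_conjecture -> nilpotent_mod_X (trunc f N).
Proof.
intros Hcollatz; induction N as [|N IHN].
- now exists O.
- rewrite trunc_S; auto using nilpotent_mod_X_cadd, nilpotent_mod_X_monomial.
Qed.

Lemma bergman_term_ge0 a n : 0 <= bergman_term a n.
Proof.
unfold bergman_term; apply Rmult_le_pos; [apply pow2_ge_0|].
apply Rmult_le_pos; [left; apply PI_RGT_0|].
left; apply Rinv_0_lt_compat, lt_0_INR; lia.
Qed.

Lemma bergman_term_le a b n m :
  (m <= n)%nat -> Cmod (a n) <= Cmod (b m) -> bergman_term a n <= bergman_term b m.
Proof.
intros Hmn Hab; unfold bergman_term.
apply Rmult_le_compat; [apply pow2_ge_0 | left; apply Rdiv_lt_0_compat, lt_0_INR;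
  [apply PI_RGT_0 | lia] | apply pow_incr; auto using Cmod_ge_0 |].
apply Rmult_le_compat_l; [left; apply PI_RGT_0|].
apply Rinv_le_contravar; [apply lt_0_INR; lia | apply le_INR; lia].
Qed.

Lemma bergman_term_0 a n : a n = RtoC 0 -> bergman_term a n = 0.
Proof. intros Han; unfold bergman_term; rewrite Han, Cmod_0; ring. Qed.

Lemma in_bergman_le a b :
  (forall n, Cmod (a n) <= Cmod (b n)) -> in_bergman b -> in_bergman a.
Proof.
intros Hab Hb.
apply (ex_series_le (V := R_CompleteNormedModule) _ (bergman_term b));
  [intros n | exact Hb].
change (norm ?x) with (Rabs x).
rewrite Rabs_pos_eq by apply bergman_term_ge0; auto using bergman_term_le.
Qed.

Lemma in_bergman_trunc f N : in_bergman f -> in_bergman (trunc f N).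
Proof.
apply in_bergman_le; intros n; unfold trunc.
destruct (Nat.ltb n N); [apply Rle_refl | rewrite Cmod_0; apply Cmod_ge_0].
Qed.

Lemma in_bergman_comp_sq f : in_bergman f -> in_bergman (comp_sq f).
Proof.
intros Hf; apply ex_series_even_support.
- intros k; apply bergman_term_0, comp_sq_double_succ.
- apply (ex_series_le (V := R_CompleteNormedModule) _ (bergman_term f));
    [intros k | exact Hf].
  change (norm ?x) with (Rabs x); rewrite Rabs_pos_eq by apply bergman_term_ge0.
  apply bergman_term_le; [lia | rewrite comp_sq_double; apply Rle_refl].
Qed.

Lemma bergman_norm_tail_small f eps :
  in_bergman f -> 0 < eps -> exists N, bergman_norm (tail f N) < eps.
Proof.
intros Hf Heps.
destruct (Series_shift_small _ (eps ^ 2) Hf) as [N HN]; [apply pow_lt; lra|].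
exists N; unfold bergman_norm; apply sqrt_lt_of_lt_sq; [exact Heps|].
rewrite (Series_incr_n_aux _ N).
- rewrite (Series_ext _ (fun k => bergman_term f (N + k))); [exact HN|].
  intros k; unfold bergman_term, tail.
  destruct (Nat.ltb_spec (N + k) N); [lia | reflexivity].
- intros k Hk; apply bergman_term_0; unfold tail.
  destruct (Nat.ltb_spec k N); [reflexivity | lia].
Qed.

Theorem mainTheorem1 :
  (forall f : nat -> C, in_bergman f ->
     exists g : nat -> C, in_bergman g /\ inX (csub (Top g) f))
  /\
  (collatz_conjecture ->
   forall f : nat -> C, in_bergman f ->
   forall eps : R, 0 < eps ->
     exists (n : nat) (g : nat -> C),
       (1 <= n)%nat /\ in_bergman g /\ inX (Nat.iter n Top g) /\
       exists x : nat -> C, inX x /\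
         bergman_norm (csub (csub f g) x) < eps).
Proof.
split.
- intros f Hf; exists (comp_sq f); split; [now apply in_bergman_comp_sq|].
  intros m _; rewrite Top_comp_sq; unfold csub; ring.
- intros Hcollatz f Hf eps Heps.
  destruct (bergman_norm_tail_small f eps Hf Heps) as [N HN].
  destruct (nilpotent_mod_X_trunc f N Hcollatz) as [n Hn].
  exists (S n), (trunc f N); repeat split; auto using in_bergman_trunc with arith.
  + apply (inX_iter_Top_le n); auto.
  + exists (fun _ => RtoC 0); split; [now intros m _|].
    now rewrite csub_0r, csub_trunc.
Qed.
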